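(* Let $\ell$ be a prime, $\mathcal{C}$ a category, and $u\colon R\to S$ a homomorphism of pseudo-rings in the category of presheaves on $\mathcal{C}$ with values in graded $\mathbb{F}_\ell$-vector spaces. Let $m\ge1$ be an integer such that for every object $i$ of $\mathcal{C}$ and every $a\in\ker u_i$, $a^m=0$. Then for every $x\in\ker\varprojlim_{\mathcal{C}}u$, $x^m=0$. If moreover $n\ge0$ is an integer such that for every object $i$ of $\mathcal{C}$ and every $b\in S_i$, $b^{\ell^n}\in\mathrm{Im}\,u_i$, then for every $y\in\varprojlim_{\mathcal{C}}S$ and every integer $N\ge n+\log_\ell(m)$, $y^{\ell^N}\in\mathrm{Im}\,\varprojlim_{\mathcal{C}}u$. In particular, if $u$ is a uniform $F$-injection (resp. uniform $F$-isomorphism), so is $\varprojlim_{\mathcal{C}}u$.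
   Context: A pseudo-ring in the (symmetric monoidal, with Koszul sign rule) category of presheaves of graded $\mathbb{F}_\ell$-vector spaces on $\mathcal{C}$ is a presheaf $R$ of graded $\mathbb{F}_\ell$-algebras, associative but not necessarily unital; a homomorphism $u$ is a compatible family of multiplicative graded linear maps $u_i\colon R_i\to S_i$. $\varprojlim_{\mathcal{C}}R$ is a graded pseudo-algebra. $u$ is a uniform $F$-injection (resp. uniform $F$-surjection) if there is $n\ge0$ such that for every object $i$ and every element $a$ of $\ker u_i$ (resp. of $S_i$), $a^{\ell^n}=0$ (resp. $a^{\ell^n}\in\mathrm{Im}\,u_i$); a uniform $F$-isomorphism is both. *)

From HB Require Import structures.
From mathcomp Require Import all_boot all_algebra.
Set Implicit Arguments. Unset Strict Implicit. Unset Printing Implicit Defensive.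
Import GRing.Theory.
Local Open Scope ring_scope.

Record category := Category {
  Ob : Type;
  Hom : Ob -> Ob -> Type;
  idm : forall i, Hom i i;
  comp : forall i j k, Hom j k -> Hom i j -> Hom i k;   (* comp g f = g o f *)
  comp1m : forall i j (f : Hom i j), comp (idm j) f = f;
  compm1 : forall i j (f : Hom i j), comp f (idm i) = f;
  compA : forall i j k l (h : Hom k l) (g : Hom j k) (f : Hom i j),
      comp h (comp g f) = comp (comp h g) f }.

(* ---------- non-unital powers: ppow mul a n = a^n for n >= 1 ---------- *)
Definition ppow {T : Type} (mul : T -> T -> T) (a : T) (n : nat) : T :=
  iter n.-1 (mul a) a.

(* Koszul sign (-1)^(p q) for degrees p q : int *)
Definition koszul_sign (p q : int) : bool := odd (absz p) && odd (absz q).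

(* ---------- Z-graded, graded-commutative (Koszul sign rule), associative,
   not necessarily unital F_l-algebras (= pseudo-rings in graded F_l-vector
   spaces). The carrier is the direct sum of the homogeneous pieces;
   gproj d is the projection onto the degree-d piece. ---------- *)
Record gpalg (l : nat) := GPAlg {
  gcar :> lmodType 'F_l;
  gmul : gcar -> gcar -> gcar;
  gproj : int -> {linear gcar -> gcar};
  gmulA : associative gmul;
  gmulDl : forall a b c, gmul (a + b) c = gmul a c + gmul b c;
  gmulDr : forall a b c, gmul a (b + c) = gmul a b + gmul a c;
  gmulZl : forall (k : 'F_l) a b, gmul (k *: a) b = k *: gmul a b;
  gmulZr : forall (k : 'F_l) a b, gmul a (k *: b) = k *: gmul a b;
  gproj_proj : forall d e a, gproj d (gproj e a) = if d == e then gproj e a else 0;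
  gdecomp : forall a, exists s : seq int, uniq s /\ a = \sum_(d <- s) gproj d a;
  gmul_graded : forall p q a b,
      gproj (p + q) (gmul (gproj p a) (gproj q b)) = gmul (gproj p a) (gproj q b);
  gmul_comm : forall p q a b,
      gmul (gproj q b) (gproj p a) =
      (if koszul_sign p q then -1 else 1) *: gmul (gproj p a) (gproj q b) }.

Arguments gmul {l} _ _ _.
Arguments gproj {l} _ _.

Definition gphom (l : nat) (A B : gpalg l) (f : A -> B) : Prop :=
  [/\ forall a b, f (a + b) = f a + f b,
      forall (k : 'F_l) a, f (k *: a) = k *: f a,
      forall a b, f (gmul A a b) = gmul B (f a) (f b) &
      forall d a, f (gproj A d a) = gproj B d (f a)].

Record presheaf (l : nat) (C : category) := Presheaf {
  psh :> Ob C -> gpalg l;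
  res : forall i j, Hom i j -> psh j -> psh i;
  res_hom : forall i j (f : Hom i j), gphom (res f);
  res_id : forall i x, res (idm i) x = x;
  res_comp : forall i j k (g : Hom j k) (f : Hom i j) x,
      res (comp g f) x = res f (res g x) }.

Arguments res {l C} _ {i j} _ _.

Section Presheaves.
Variables (l : nat) (C : category).

Definition pshom (R S : presheaf l C) (u : forall i, R i -> S i) : Prop :=
  (forall i, gphom (u i)) /\
  (forall i j (f : Hom i j) x, u i (res R f x) = res S f (u j x)).

(* ---------- the limit over C (computed in graded F_l-vector spaces):
   compatible families of finitely many total degrees, with componentwise
   operations ---------- *)
Definition limit_elt (R : presheaf l C) (x : forall i, R i) : Prop :=
  (forall i j (f : Hom i j), res R f (x j) = x i) /\
  (exists s : seq int, forall i, x i = \sum_(d <- s) gproj (R i) d (x i)).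

Definition lim_zero (R : presheaf l C) : forall i, R i := fun i => 0.

Definition lim_mul (R : presheaf l C) (x y : forall i, R i) : forall i, R i :=
  fun i => gmul (R i) (x i) (y i).

Definition lim_map (R S : presheaf l C) (u : forall i, R i -> S i)
  (x : forall i, R i) : forall i, S i := fun i => u i (x i).

Definition unif_F_inj (R S : presheaf l C) (u : forall i, R i -> S i) : Prop :=
  exists n : nat, forall i (a : R i), u i a = 0 -> ppow (gmul (R i)) a (l ^ n) = 0.

Definition unif_F_surj (R S : presheaf l C) (u : forall i, R i -> S i) : Prop :=
  exists n : nat, forall i (b : S i),
    exists a : R i, u i a = ppow (gmul (S i)) b (l ^ n).

Definition unif_F_iso (R S : presheaf l C) (u : forall i, R i -> S i) : Prop :=
  unif_F_inj u /\ unif_F_surj u.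

Definition lim_unif_F_inj (R S : presheaf l C) (u : forall i, R i -> S i) : Prop :=
  exists n : nat, forall x, limit_elt x -> lim_map u x = lim_zero S ->
    ppow (@lim_mul R) x (l ^ n) = lim_zero R.

Definition lim_unif_F_surj (R S : presheaf l C) (u : forall i, R i -> S i) : Prop :=
  exists n : nat, forall y, limit_elt y ->
    exists z, limit_elt z /\ lim_map u z = ppow (@lim_mul S) y (l ^ n).

Definition lim_unif_F_iso (R S : presheaf l C) (u : forall i, R i -> S i) : Prop :=
  lim_unif_F_inj u /\ lim_unif_F_surj u.

End Presheaves.

From Pilot Require Import Defs.
From HB Require Import structures.
From mathcomp Require Import all_boot all_algebra.
From Stdlib Require Import FunctionalExtensionality ClassicalEpsilon.
Set Implicit Arguments. Unset Strict Implicit. Unset Printing Implicit Defensive.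
Import GRing.Theory.
Local Open Scope ring_scope.

(* Frobenius is additive on a graded-commutative F_l-algebra: for l = 2 the
   algebra is commutative, and for l odd the even part of an element is central
   while its odd part squares to zero, so a^l only sees the even part.  Hence
   (r - s)^m = 0 with m <= l^k forces r^(l^k) = s^(l^k).  Given y in lim S,
   choose preimages a_i of y_i^(l^n); restriction moves a_j to a_i up to an
   element of ker u_i, so the a_i^(l^k) form a compatible family, and cutting
   it down to the finitely many degrees of y^(l^N) gives an element of lim R
   mapping to y^(l^N).  The statement about kernels is componentwise. *)

Section AdditiveMaps.
Variables (V W : zmodType) (f : V -> W).
Hypothesis fD : {morph f : a b / a + b}.

Lemma additive0 : f 0 = 0.
Proof. by apply: (addrI (f 0)); rewrite -fD !addr0. Qed.

Lemma additiveB a b : f (a - b) = f a - f b.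
Proof. by rewrite -[in f a](subrK b a) fD addrK. Qed.

Lemma additive_sum I (r : seq I) (P : pred I) (F : I -> V) :
  f (\sum_(i <- r | P i) F i) = \sum_(i <- r | P i) f (F i).
Proof. exact: (big_morph f fD additive0). Qed.

End AdditiveMaps.

Lemma ppow_morph (T1 T2 : Type) (mul1 : T1 -> T1 -> T1) (mul2 : T2 -> T2 -> T2)
    (f : T1 -> T2) : {morph f : x y / mul1 x y >-> mul2 x y} ->
  forall a n, f (ppow mul1 a n) = ppow mul2 (f a) n.
Proof. by move=> fM a [|n] //; rewrite /ppow /=; elim: n => [|n IH] //=; rewrite fM IH. Qed.

Section GradedPseudoAlgebra.
Variables (l : nat) (A : gpalg l).
Local Notation "a ** b" := (gmul A a b) (at level 40, left associativity).
Local Notation gproj := (gproj A).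

Lemma gmul0r b : 0 ** b = 0.
Proof. exact: additive0 (fun x y => gmulDl x y b). Qed.

Lemma gmulr0 a : a ** 0 = 0.
Proof. exact: additive0 (gmulDr a). Qed.

Lemma gmul_suml I (r : seq I) (P : pred I) (F : I -> A) b :
  (\sum_(i <- r | P i) F i) ** b = \sum_(i <- r | P i) F i ** b.
Proof. exact: (additive_sum (fun x y => gmulDl x y b)). Qed.

Lemma gmul_sumr I (r : seq I) (P : pred I) (F : I -> A) a :
  a ** (\sum_(i <- r | P i) F i) = \sum_(i <- r | P i) a ** F i.
Proof. exact: (additive_sum (gmulDr a)). Qed.

Lemma ppowSr (a : A) n : ppow (gmul A) a n.+2 = a ** ppow (gmul A) a n.+1.
Proof. by []. Qed.

Lemma ppow_sqr0 (a : A) n : a ** a = 0 -> (2 < n)%N -> ppow (gmul A) a n = 0.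
Proof.
move=> a2 /subnKC <-; elim: (n - 3)%N => [|k IH]; first by rewrite ppowSr /= gmulA a2 gmul0r.
by rewrite addnS ppowSr IH gmulr0.
Qed.

Definition supported (s : seq int) (w : A) := forall d, d \notin s -> gproj d w = 0.

Definition degsum (s t : seq int) := [seq d + e | d <- s, e <- t].

Lemma supported_sub s t w : supported s w -> {subset s <= t} -> supported t w.
Proof. by move=> sw st d dt; apply: sw; apply: contra dt; apply: st. Qed.

Lemma supported_proj_sum s w : supported s (\sum_(d <- s) gproj d w).
Proof.
move=> e es; rewrite linear_sum big1_seq // => d /andP[_ ds].
by rewrite gproj_proj; case: eqP => // ed; rewrite ed ds in es.
Qed.

Lemma exists_support w : exists s, supported s w.
Proof. by have [s [_ ->]] := gdecomp w; exists s; apply: supported_proj_sum. Qed.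

Lemma supported_decomp s w : uniq s -> supported s w -> w = \sum_(d <- s) gproj d w.
Proof.
move=> us sw; have [t [_ wt]] := gdecomp w.
have -> : \sum_(d <- s) gproj d w = \sum_(d <- s) \sum_(e <- t) gproj d (gproj e w).
  by apply: eq_bigr => d _; rewrite {1}wt linear_sum.
rewrite {1}wt exchange_big /=; apply: eq_bigr => e _.
under eq_bigr do rewrite gproj_proj.
have [es|es] := boolP (e \in s).
  by rewrite (bigD1_seq e) //= eqxx big1 ?addr0 // => d /negPf->.
rewrite sw // big1_seq // => d /andP[_ ds].
by case: eqP => // de; rewrite de ds in es.
Qed.

Lemma supported_add s a b : supported s a -> supported s b -> supported s (a + b).
Proof. by move=> sa sb d ds; rewrite linearD sa // sb // addr0. Qed.

Lemma gmul_sums I J (r : seq I) (t : seq J) (P : pred I) (Q : pred J) F G :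
  (\sum_(i <- r | P i) F i) ** (\sum_(j <- t | Q j) G j) =
  \sum_(i <- r | P i) \sum_(j <- t | Q j) F i ** G j.
Proof. by rewrite gmul_suml; under eq_bigr do rewrite gmul_sumr. Qed.

Lemma supported_mul s t a b :
  supported s a -> supported t b -> supported (degsum s t) (a ** b).
Proof.
move=> sa tb f ft.
have usa : supported (undup s) a by apply: supported_sub sa _ => d; rewrite mem_undup.
have utb : supported (undup t) b by apply: supported_sub tb _ => d; rewrite mem_undup.
rewrite (supported_decomp (undup_uniq s) usa) (supported_decomp (undup_uniq t) utb).
rewrite gmul_sums linear_sum big1_seq // => d /andP[_ ds].
rewrite linear_sum big1_seq // => e /andP[_ et].
rewrite -(gmul_graded d e) gproj_proj; case: eqP => // fde.
rewrite mem_undup in ds; rewrite mem_undup in et.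
by rewrite fde (allpairs_f (fun x y : int => x + y)) in ft.
Qed.

Lemma supported_ppow s a n : supported s a -> supported (ppow degsum s n) (ppow (gmul A) a n).
Proof.
move=> sa; case: n => [|n] //; elim: n => [|n IH] //.
by rewrite ppowSr; apply: supported_mul.
Qed.

Definition even_part s a := \sum_(d <- s | ~~ odd `|d|%N) gproj d a.
Definition odd_part s a := \sum_(d <- s | odd `|d|%N) gproj d a.

Lemma even_odd_split s a : \sum_(d <- s) gproj d a = even_part s a + odd_part s a.
Proof.
rewrite (bigID (fun d : int => ~~ odd `|d|%N)) /=.
by under [X in _ + X]eq_bigl do rewrite negbK.
Qed.

Lemma even_partD s a b : even_part s (a + b) = even_part s a + even_part s b.
Proof. by rewrite /even_part -big_split; apply: eq_bigr => d _; rewrite raddfD. Qed.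

Lemma even_part_central s a b : even_part s a ** b = b ** even_part s a.
Proof.
have [t [_ ->]] := gdecomp b; rewrite !gmul_sums [RHS]exchange_big /=.
apply: eq_bigr => p ep; apply: eq_bigr => q _.
by rewrite gmul_comm /koszul_sign (negPf ep) andbF scale1r.
Qed.

Lemma odd_part_anticomm s t a b : odd_part t b ** odd_part s a = - (odd_part s a ** odd_part t b).
Proof.
rewrite !gmul_sums exchange_big /= -sumrN; apply: eq_bigr => p op.
rewrite -sumrN; apply: eq_bigr => q oq.
by rewrite gmul_comm /koszul_sign op oq scaleN1r.
Qed.

Lemma odd_part_sqr0 s a : (2%:R : 'F_l) != 0 -> odd_part s a ** odd_part s a = 0.
Proof.
move=> two_neq0; set x := _ ** _.
have : (2%:R : 'F_l) *: x == 0 by rewrite scaler_nat mulr2n {1}/x odd_part_anticomm addNr.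
by rewrite scaler_eq0 (negPf two_neq0) => /eqP.
Qed.

Lemma gmulC_char2 : l = 2%N -> commutative (gmul A).
Proof.
move=> l2 a b; have [s [_ ->]] := gdecomp a; have [t [_ ->]] := gdecomp b.
rewrite !gmul_sums [RHS]exchange_big /=; apply: eq_bigr => q _; apply: eq_bigr => p _.
have F2 : (2 \in [pchar 'F_l])%N by rewrite l2 pchar_Fp.
have N1 : (-1 : 'F_l) = 1.
  by apply/eqP; rewrite -subr_eq0 -opprD oppr_eq0 -mulr2n -(dvdn_pcharf F2).
by rewrite gmul_comm N1 if_same scale1r.
Qed.

End GradedPseudoAlgebra.

(* Adjoining a unit turns A into a ring, where MathComp's binomial and power
   laws apply. *)
Definition unitization l (A : gpalg l) := ('F_l * A)%type.
HB.instance Definition _ l (A : gpalg l) := GRing.Zmodule.on (unitization A).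

Section Unitization.
Variables (l : nat) (A : gpalg l).
Local Notation "a ** b" := (gmul A a b) (at level 40, left associativity).
Local Notation U := (unitization A).

Definition unitization_mul (x y : U) : U :=
  (x.1 * y.1, x.1 *: y.2 + y.1 *: x.2 + x.2 ** y.2).

Lemma unitization_mulA : associative unitization_mul.
Proof.
move=> [k1 a1] [k2 a2] [k3 a3]; rewrite /unitization_mul /=; congr (_, _); first by rewrite mulrA.
rewrite !scalerDr !gmulDl !gmulDr !gmulZl !gmulZr !scalerA gmulA [k3 * k1]mulrC [k3 * k2]mulrC.
by rewrite !addrA [LHS](AC 7 (1*2*4*6*3*5*7)).
Qed.

Lemma unitization_mul1r : left_id (1, 0) unitization_mul.
Proof. by move=> [k a]; rewrite /unitization_mul /= mul1r scale1r scaler0 gmul0r !addr0. Qed.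

Lemma unitization_mulr1 : right_id (1, 0) unitization_mul.
Proof. by move=> [k a]; rewrite /unitization_mul /= mulr1 scale1r scaler0 gmulr0 add0r addr0. Qed.

Lemma unitization_mulDl : left_distributive unitization_mul +%R.
Proof.
move=> [k1 a1] [k2 a2] [k3 a3]; rewrite /unitization_mul /=; congr (_, _); first by rewrite mulrDl.
by rewrite scalerDl scalerDr gmulDl /= !addrA [LHS](AC 6 (1*3*5*2*4*6)).
Qed.

Lemma unitization_mulDr : right_distributive unitization_mul +%R.
Proof.
move=> [k1 a1] [k2 a2] [k3 a3]; rewrite /unitization_mul /=; congr (_, _); first by rewrite mulrDr.
by rewrite scalerDl scalerDr gmulDr /= !addrA [LHS](AC 6 (1*3*5*2*4*6)).
Qed.

Lemma unitization_oner_neq0 : (1, 0) != 0 :> U.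
Proof. by rewrite xpair_eqE oner_eq0. Qed.

End Unitization.

HB.instance Definition _ l (A : gpalg l) :=
  GRing.Zmodule_isNzRing.Build (unitization A) (@unitization_mulA l A)
    (@unitization_mul1r l A) (@unitization_mulr1 l A)
    (@unitization_mulDl l A) (@unitization_mulDr l A) (@unitization_oner_neq0 l A).

Section Frobenius.
Variables (l : nat) (A : gpalg l).
Hypothesis l_prime : prime l.
Local Notation "a ** b" := (gmul A a b) (at level 40, left associativity).
Local Notation pow := (ppow (gmul A)).

Definition unitization_in (a : A) : unitization A := (0, a).

Lemma unitization_inD : {morph unitization_in : a b / a + b}.
Proof. by move=> a b; rewrite /unitization_in; congr (_, _); rewrite addr0. Qed.

Lemma unitization_inM a b : unitization_in a * unitization_in b = unitization_in (a ** b).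
Proof. by rewrite /unitization_in {1}/GRing.mul /= /unitization_mul /= mulr0 !scale0r !add0r. Qed.

Lemma unitization_in_inj : injective unitization_in.
Proof. by move=> a b []. Qed.

Lemma unitization_inX a n : (0 < n)%N -> unitization_in a ^+ n = unitization_in (pow a n).
Proof.
case: n => // n _; elim: n => [|n IH]; first by rewrite expr1.
by rewrite exprS IH unitization_inM.
Qed.

Lemma ppowM a p q : (0 < p)%N -> (0 < q)%N -> pow (pow a p) q = pow a (p * q).
Proof.
move=> p_gt0 q_gt0; apply: unitization_in_inj.
by rewrite -!unitization_inX ?muln_gt0 ?p_gt0 // exprM.
Qed.

Lemma ppow_eq0_le a m n : (0 < m)%N -> (m <= n)%N -> pow a m = 0 -> pow a n = 0.
Proof.
move=> m_gt0 le_mn am0; apply: unitization_in_inj.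
rewrite -unitization_inX ?(leq_trans m_gt0 le_mn) // -(subnK le_mn) exprD.
by rewrite (unitization_inX _ m_gt0) am0 /unitization_in mulr0.
Qed.

Lemma frobeniusD_comm a b : a ** b = b ** a -> pow (a + b) l = pow a l + pow b l.
Proof.
move=> ab_comm; have l_gt0 := prime_gt0 l_prime.
have charU : l \in [pchar (unitization A)].
  by rewrite inE l_prime /= pairMnE /= -[(1 : 'F_l) *+ l]/(l%:R) pchar_Fp_0 // mul0rn.
have commU : GRing.comm (unitization_in a) (unitization_in b).
  by rewrite /GRing.comm !unitization_inM ab_comm.
apply: unitization_in_inj; have := pFrobenius_autD_comm charU commU.
by rewrite !pFrobenius_autE -unitization_inD !unitization_inX // unitization_inD.
Qed.

Lemma ppow_even_part s : l != 2%N -> uniq s ->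
  forall a, supported s a -> pow a l = pow (even_part s a) l.
Proof.
move=> l_neq2 us a sa; have l_gt2 : (2 < l)%N by rewrite ltn_neqAle eq_sym l_neq2 prime_gt1.
have two_neq0 : (2%:R : 'F_l) != 0.
  by rewrite -(dvdn_pcharf (pchar_Fp l_prime)) dvdn_prime2 //; apply: contra_neq l_neq2 => <-.
rewrite {1}(supported_decomp us sa) even_odd_split frobeniusD_comm; last exact: even_part_central.
by rewrite (ppow_sqr0 (odd_part_sqr0 _ _ two_neq0)) ?addr0.
Qed.

Lemma frobeniusD a b : pow (a + b) l = pow a l + pow b l.
Proof.
have [l2|l_neq2] := eqVneq l 2%N; first by apply: frobeniusD_comm; apply: gmulC_char2.
have [sa a_sa] := exists_support a; have [sb b_sb] := exists_support b.
set s := undup (sa ++ sb); have us : uniq s := undup_uniq _.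
have a_s : supported s a by apply: supported_sub a_sa _ => d; rewrite mem_undup mem_cat => ->.
have b_s : supported s b by apply: supported_sub b_sb _ => d; rewrite mem_undup mem_cat orbC => ->.
have ab_s : supported s (a + b) by apply: supported_add.
have even_pow := ppow_even_part l_neq2 us.
rewrite (even_pow _ ab_s) (even_pow _ a_s) (even_pow _ b_s) even_partD.
by apply: frobeniusD_comm; apply: even_part_central.
Qed.

Lemma frobeniusD_expn a b k : pow (a + b) (l ^ k) = pow a (l ^ k) + pow b (l ^ k).
Proof.
have l_gt0 := prime_gt0 l_prime.
elim: k => [|k IH] //.
by rewrite expnSr -!ppowM ?expn_gt0 ?l_gt0 // IH frobeniusD.
Qed.

Lemma ppow_expn_eq_of_nil r s m k :
  (0 < m)%N -> (m <= l ^ k)%N -> pow (r - s) m = 0 -> pow r (l ^ k) = pow s (l ^ k).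
Proof.
move=> m_gt0 le_m_lk rs_nil.
by rewrite -[r](subrK s) addrC frobeniusD_expn (ppow_eq0_le m_gt0 le_m_lk rs_nil) addr0.
Qed.

End Frobenius.

Section Limits.
Variables (l : nat) (C : category).

Lemma lim_ppow (T : presheaf l C) x n i : ppow (@lim_mul _ _ T) x n i = ppow (gmul (T i)) (x i) n.
Proof. exact: (ppow_morph (f := fun x : forall i, T i => x i)). Qed.

Definition lim_trunc (T : presheaf l C) (s : seq int) (w : forall i, T i) : forall i, T i :=
  fun i => \sum_(d <- s) gproj (T i) d (w i).

Lemma lim_trunc_limit_elt (T : presheaf l C) s (w : forall i, T i) : uniq s ->
  (forall i j (f : Defs.Hom i j), res T f (w j) = w i) -> limit_elt (lim_trunc s w).
Proof.
move=> us w_comp; split=> [i j f|].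
  have [resD _ _ res_proj] := res_hom T f.
  rewrite /lim_trunc (additive_sum resD); apply: eq_bigr => d _.
  by rewrite res_proj w_comp.
by exists s => i; apply: supported_decomp => //; apply: supported_proj_sum.
Qed.

Lemma lim_trunc_id (T : presheaf l C) s (w : forall i, T i) : uniq s ->
  (forall i, supported s (w i)) -> lim_trunc s w = w.
Proof.
move=> us ws; apply: functional_extensionality_dep => i.
by rewrite /lim_trunc -supported_decomp.
Qed.

Variables (R S : presheaf l C).
(* As in [pshom], the object argument of [u] is explicit. *)
Unset Implicit Arguments.
Variable u : forall i, R i -> S i.
Set Implicit Arguments.
Hypothesis u_hom : pshom u.

Lemma lim_map_trunc s w : lim_map u (lim_trunc s w) = lim_trunc s (lim_map u w).
Proof.
apply: functional_extensionality_dep => i; have [uD _ _ u_proj] := u_hom.1 i.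
by rewrite /lim_map /lim_trunc (additive_sum uD); apply: eq_bigr => d _; rewrite u_proj.
Qed.

Variable m : nat.
Hypothesis ker_nil : forall i (a : R i), u i a = 0 -> ppow (gmul (R i)) a m = 0.

Lemma lim_ker_nil x : lim_map u x = lim_zero S -> ppow (@lim_mul _ _ R) x m = lim_zero R.
Proof.
move=> ux0; apply: functional_extensionality_dep => i.
by rewrite lim_ppow; apply: ker_nil; apply: (congr1 (fun y => y i) ux0).
Qed.

Hypothesis l_prime : prime l.

Lemma preimage_ppow_compatible n k (y : forall i, S i) (a : forall i, R i) :
  (0 < m)%N -> (m <= l ^ k)%N -> (forall i j (f : Defs.Hom i j), res S f (y j) = y i) ->
  (forall i, u i (a i) = ppow (gmul (S i)) (y i) (l ^ n)) ->
  forall i j (f : Defs.Hom i j),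
    res R f (ppow (gmul (R j)) (a j) (l ^ k)) = ppow (gmul (R i)) (a i) (l ^ k).
Proof.
move=> m_gt0 le_m_lk y_comp a_pre i j f.
have [_ _ resRM _] := res_hom R f; have [_ _ resSM _] := res_hom S f.
have [uD _ _ _] := u_hom.1 i.
rewrite (ppow_morph resRM); apply: (ppow_expn_eq_of_nil l_prime m_gt0 le_m_lk); apply: ker_nil.
by rewrite (additiveB uD) u_hom.2 !a_pre (ppow_morph resSM) y_comp subrr.
Qed.

Lemma lim_ppow_in_image n N (y : forall i, S i) :
  (0 < m)%N -> (n <= N)%N -> (m <= l ^ (N - n))%N ->
  (forall i (b : S i), exists a : R i, u i a = ppow (gmul (S i)) b (l ^ n)) ->
  limit_elt y -> exists z, limit_elt z /\ lim_map u z = ppow (@lim_mul _ _ S) y (l ^ N).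
Proof.
move=> m_gt0 le_nN le_m_lk u_Fsurj [y_comp [s y_s]].
have l_gt0 := prime_gt0 l_prime.
have [a a_pre] : exists a : forall i, R i, forall i, u i (a i) = ppow (gmul (S i)) (y i) (l ^ n).
  exists (fun i => sval (constructive_indefinite_description _ (u_Fsurj i (y i)))).
  by move=> i; case: constructive_indefinite_description.
set T := undup (ppow degsum s (l ^ N)).
exists (lim_trunc T (fun i => ppow (gmul (R i)) (a i) (l ^ (N - n)))); split.
  apply: lim_trunc_limit_elt; first exact: undup_uniq.
  exact: preimage_ppow_compatible.
have yN_T i : supported T (ppow (gmul (S i)) (y i) (l ^ N)).
  have yi_s : supported s (y i) by rewrite y_s; apply: supported_proj_sum.
  by apply: supported_sub (supported_ppow yi_s) _ => d; rewrite mem_undup.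
have -> : ppow (@lim_mul _ _ S) y (l ^ N) = fun i => ppow (gmul (S i)) (y i) (l ^ N).
  by apply: functional_extensionality_dep => i; rewrite lim_ppow.
rewrite lim_map_trunc -(lim_trunc_id (undup_uniq _) yN_T); congr lim_trunc.
apply: functional_extensionality_dep => i; have [_ _ uM _] := u_hom.1 i.
by rewrite /lim_map (ppow_morph uM) a_pre ppowM ?expn_gt0 ?l_gt0 // -expnD subnKC.
Qed.

End Limits.

Unset Implicit Arguments.
Set Strict Implicit.

Theorem lemma10p13 (l : nat) (hl : prime l) (C : category)
  (R S : presheaf l C) (u : forall i, R i -> S i) (hu : pshom u) :
  (forall m : nat, (1 <= m)%N ->
     (forall i (a : R i), u i a = 0 -> ppow (gmul (R i)) a m = 0) ->
     (forall x, limit_elt x -> lim_map u x = lim_zero S ->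
        ppow (@lim_mul _ _ R) x m = lim_zero R) /\
     (forall n : nat,
        (forall i (b : S i), exists a : R i, u i a = ppow (gmul (S i)) b (l ^ n)) ->
        forall y, limit_elt y ->
        forall N : nat, (n <= N)%N -> (m <= l ^ (N - n))%N ->
          exists z, limit_elt z /\ lim_map u z = ppow (@lim_mul _ _ S) y (l ^ N)))
  /\ (unif_F_inj u -> lim_unif_F_inj u)
  /\ (unif_F_iso u -> lim_unif_F_iso u).
Proof.
have lim_inj : unif_F_inj u -> lim_unif_F_inj u.
  by case=> k ker_nil; exists k => x _; apply: (lim_ker_nil ker_nil).
split.
  move=> m m_gt0 ker_nil; split=> [x _|n u_Fsurj y y_lim N le_nN le_m]; first exact: lim_ker_nil.
  exact: (lim_ppow_in_image hu ker_nil hl m_gt0 le_nN le_m u_Fsurj y_lim).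
split=> // [[u_inj [n u_Fsurj]]]; split; first exact: lim_inj.
case: u_inj => k ker_nil; exists (n + k)%N => y y_lim.
apply: (lim_ppow_in_image hu ker_nil hl _ _ _ u_Fsurj y_lim).
- by rewrite expn_gt0 prime_gt0.
- exact: leq_addr.
- by rewrite addKn.
Qed.
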